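(* Let $M$ be a three-dimensional warped product space with Euclidean coordinates $(z^1,z^2,z^3)$ on the underlying $\mathbb{R}^3$, and let $\vec r$ be a surface in $M$ (with position vector $\vec r$). For $\alpha=1,2,3$ let $E_\alpha=\frac{\partial}{\partial z^\alpha}\times_E\vec r$, where $\times_E$ is the Euclidean cross product. Then each $E_\alpha$ satisfies $$\vec r_i\cdot D_jE_\alpha+\vec r_j\cdot D_iE_\alpha=0\quad\text{for all }i,j,$$ and moreover $E_\alpha=\frac{\partial}{\partial z^\alpha}\times X$, where $X=rf(r)\frac{\partial}{\partial r}$ and $\times$ is the cross product induced by the warped metric (with the same orientation).
   Context: A three-dimensional warped product space is (a region of) $\mathbb{R}^3$ with polar coordinates $(r,\theta)$ and metric $ds^2=\frac{1}{f(r)^2}dr^2+r^2dS_2^2$ ($dS_2^2$ round metric, $f$ smooth and positive); $\cdot$ is this metric, $D$ its Levi-Civita connection, $\vec r_i=\partial \vec r/\partial x^i$ in local coordinates on the surface. The cross product $\times$ induced by $\cdot$ is the unique bilinear map with $a\times b\perp a,b$, $|a\times b|^2=|a|^2|b|^2-(a\cdot b)^2$, and $(a,b,a\times b)$ positively oriented for independent $a,b$. *)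

From HB Require Import structures.
From mathcomp Require Import all_boot all_order all_algebra.
From mathcomp Require Import all_classical all_reals all_analysis.
Set Implicit Arguments. Unset Strict Implicit. Unset Printing Implicit Defensive.
Import Order.TTheory GRing.Theory Num.Theory.
Import numFieldNormedType.Exports.
Local Open Scope ring_scope.

Section WarpedDefs.
Variable R : realType.

Definition e3 (a : 'I_3) : 'rV[R]_3 := delta_mx 0 a.
Definition e2 (i : 'I_2) : 'rV[R]_2 := delta_mx 0 i.

Definition cmp (a : 'rV[R]_3) (k : nat) : R := a 0 (inord k).

Definition enorm (z : 'rV[R]_3) : R := Num.sqrt (\sum_k z 0 k ^+ 2).

Definition crossE (a b : 'rV[R]_3) : 'rV[R]_3 :=
  \row_(k < 3)
    (if (k == 0 :> nat) then cmp a 1 * cmp b 2 - cmp a 2 * cmp b 1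
     else if (k == 1 :> nat) then cmp a 2 * cmp b 0 - cmp a 0 * cmp b 2
     else cmp a 0 * cmp b 1 - cmp a 1 * cmp b 0).

(* The warped metric ds^2 = dr^2/f(r)^2 + r^2 dS_2^2 written in the Euclidean
   coordinates z of R^3: since dz.dz = dr^2 + r^2 dS_2^2 and dr = (z.dz)/r,
   g_z(u,v) = u.v + (1/f(r)^2 - 1) (z.u)(z.v)/r^2,  r = |z|. *)
Definition gmat (f : R -> R) (z : 'rV[R]_3) : 'M[R]_3 :=
  1%:M + (((f (enorm z))^-2 - 1) / (enorm z) ^+ 2) *: (z^T *m z).

Definition gdot (G : 'M[R]_3) (u v : 'rV[R]_3) : R := (u *m G *m v^T) 0 0.

Definition dgmat (f : R -> R) (z : 'rV[R]_3) (c l b : 'I_3) : R :=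
  'D_(e3 c) (fun y => gmat f y l b) z.

Definition christoffel (f : R -> R) (z : 'rV[R]_3) (k a b : 'I_3) : R :=
  2^-1 * \sum_(l < 3) (invmx (gmat f z)) k l *
     (dgmat f z a l b + dgmat f z b l a - dgmat f z l a b).

Definition rpart (r : 'rV[R]_2 -> 'rV[R]_3) (j : 'I_2) (p : 'rV[R]_2) : 'rV[R]_3 :=
  'D_(e2 j) r p.

Definition covD (f : R -> R) (r : 'rV[R]_2 -> 'rV[R]_3)
    (E : 'rV[R]_3 -> 'rV[R]_3) (j : 'I_2) (p : 'rV[R]_2) : 'rV[R]_3 :=
  \row_(k < 3) ('D_(e2 j) (fun q => E (r q) 0 k) p +
      \sum_(a < 3) \sum_(b < 3)
         christoffel f (r p) k a b * (rpart r j p) 0 a * E (r p) 0 b).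

Definition Efield (al : 'I_3) (z : 'rV[R]_3) : 'rV[R]_3 := crossE (e3 al) z.

(* X = r f(r) d/dr, where d/dr = z/|z| in Euclidean coordinates *)
Definition Xfield (f : R -> R) (z : 'rV[R]_3) : 'rV[R]_3 :=
  (enorm z * f (enorm z)) *: ((enorm z)^-1 *: z).

Definition mat3 (a b c : 'rV[R]_3) : 'M[R]_3 :=
  \matrix_(k < 3) (if (k == 0 :> nat) then a else if (k == 1 :> nat) then b else c).

(* c is "the cross product induced by the metric G" (at one point):
   the bilinear map with  a x b _|_ a, b ;  |a x b|^2 = |a|^2|b|^2 - (a.b)^2 ;
   (a, b, a x b) positively oriented (w.r.t. the standard orientation of R^3,
   the one of the Euclidean cross product) for independent a, b. *)
Definition is_cross (G : 'M[R]_3) (c : 'rV[R]_3 -> 'rV[R]_3 -> 'rV[R]_3) : Prop :=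
  [/\ (forall (k : R) a a' b, c (k *: a + a') b = k *: c a b + c a' b),
      (forall (k : R) a b b', c a (k *: b + b') = k *: c a b + c a b'),
      (forall a b, gdot G (c a b) a = 0 /\ gdot G (c a b) b = 0),
      (forall a b, gdot G (c a b) (c a b) =
                   gdot G a a * gdot G b b - (gdot G a b) ^+ 2) &
      (forall a b, (forall s t : R, s *: a + t *: b = 0 -> s = 0 /\ t = 0) ->
                   0 < \det (mat3 a b (c a b)))].

End WarpedDefs.

(* In Euclidean coordinates the warped metric is g = 1 + phi(|z|) z^T z with
   phi(s) = (f(s)^-2 - 1) / s^2 ([warp] below).  Lowering the index of the
   Christoffel symbols turns r_i . D_j E + r_j . D_i E into the Lie derivative
   (L_E g)(r_i, r_j).  The field E = e_al x_E z is an infinitesimal Euclidean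
   rotation: it preserves the Euclidean metric and the form z.dz, so
   L_E g = (D_E phi) (z.dz)^2, and D_E phi = 0 since phi is radial and E is
   orthogonal to z.
   For the cross product, z is an eigenvector of g with eigenvalue f^-2, so
   v = c(e_al, z), being g-orthogonal to e_al and z, is Euclidean-orthogonal to
   both, hence v = l (e_al x_E z).  The norm condition gives l^2 = f^-2 and the
   orientation condition l > 0, so c(e_al, X) = f c(e_al, z) = e_al x_E z. *)

From HB Require Import structures.
From mathcomp Require Import all_boot all_order all_algebra.
From mathcomp Require Import all_classical all_reals all_analysis.
From mathcomp Require Import ring lra.
Import Order.TTheory GRing.Theory Num.Theory.
Import numFieldNormedType.Exports.
Local Open Scope ring_scope.

Section Warped.
Set Implicit Arguments.
Unset Strict Implicit.
Variable R : realType.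
Implicit Types (f : R -> R) (a u v w z : 'rV[R]_3).

Notation i0 := (@inord 2 0).
Notation i1 := (@inord 2 1).
Notation i2 := (@inord 2 2).

Lemma sum_ord3 (F : 'I_3 -> R) : \sum_(i < 3) F i = F i0 + F i1 + F i2.
Proof.
rewrite !big_ord_recl big_ord0 addr0 addrA.
by congr (F _ + F _ + F _); apply/val_inj; rewrite /= inordK.
Qed.

Lemma inord3_eq (i j : nat) :
  (i < 3)%N -> (j < 3)%N -> (inord i == inord j :> 'I_3) = (i == j).
Proof. by move=> ? ?; apply/eqP/eqP => [/(congr1 val)|->//]; rewrite /= !inordK. Qed.

Lemma row3P u v : u 0 i0 = v 0 i0 -> u 0 i1 = v 0 i1 -> u 0 i2 = v 0 i2 -> u = v.
Proof. by move=> ? ? ?; apply/rowP => k; rewrite -(inord_val k); case: k => -[|[|[|]]]. Qed.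

Lemma det_mx33 (M : 'M[R]_3) : \det M =
  M i0 i0 * (M i1 i1 * M i2 i2 - M i1 i2 * M i2 i1)
  - M i0 i1 * (M i1 i0 * M i2 i2 - M i1 i2 * M i2 i0)
  + M i0 i2 * (M i1 i0 * M i2 i1 - M i1 i1 * M i2 i0).
Proof.
rewrite (expand_det_row _ ord0) !big_ord_recl big_ord0 /cofactor.
rewrite !(expand_det_row _ ord0) !big_ord_recl !big_ord0 /cofactor !det_mx11 !mxE.
pose g (i j : nat) := M (inord i) (inord j).
have inordE (x y : 'I_3) : M x y = g x y by rewrite /g !inord_val.
rewrite !inordE /= !inordK // /bump /=; ring.
Qed.

Definition edot u v := u 0 i0 * v 0 i0 + u 0 i1 * v 0 i1 + u 0 i2 * v 0 i2.

Lemma edot_enorm z : edot z z = enorm z ^+ 2.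
Proof.
rewrite /enorm sqr_sqrtr; last by apply: sumr_ge0 => i _; exact: sqr_ge0.
by rewrite sum_ord3 /edot !expr2.
Qed.

Lemma edot_eq0 w : edot w w = 0 -> w = 0.
Proof. by rewrite /edot => w0; apply: row3P; rewrite mxE; nra. Qed.

Lemma crossE0 a z : crossE a z 0 i0 = a 0 i1 * z 0 i2 - a 0 i2 * z 0 i1.
Proof. by rewrite mxE inordK. Qed.
Lemma crossE1 a z : crossE a z 0 i1 = a 0 i2 * z 0 i0 - a 0 i0 * z 0 i2.
Proof. by rewrite mxE inordK. Qed.
Lemma crossE2 a z : crossE a z 0 i2 = a 0 i0 * z 0 i1 - a 0 i1 * z 0 i0.
Proof. by rewrite mxE inordK. Qed.

Definition crossEE := (crossE0, crossE1, crossE2).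

Lemma edot_crossE_orthogonal a z v (k : 'I_3) : edot v a = 0 -> edot v z = 0 ->
  edot (crossE a z) (crossE a z) * v 0 k = edot v (crossE a z) * crossE a z 0 k.
Proof.
move=> va vz; pose w := crossE a z.
have lagrange : edot w w * v 0 k = edot v w * w 0 k
    + (edot v a * edot z z - edot v z * edot a z) * a 0 k
    + (edot v z * edot a a - edot v a * edot a z) * z 0 k.
  by rewrite -(inord_val k); case: k => -[|[|[|]]] //= _; rewrite /edot /w !crossEE; ring.
by rewrite lagrange va vz; ring.
Qed.

Lemma edot_crossEr a z : edot z (crossE a z) = 0.
Proof. by rewrite /edot !crossEE; ring. Qed.

Lemma edot_crossE a z :
  edot (crossE a z) (crossE a z) = edot a a * edot z z - edot a z ^+ 2.
Proof. by rewrite /edot !crossEE; ring. Qed.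

Lemma crossE_independent a z : crossE a z != 0 ->
  forall s t : R, s *: a + t *: z = 0 -> s = 0 /\ t = 0.
Proof.
move=> w_neq0 s t /rowP comb0; pose U k := s * a 0 k + t * z 0 k.
have U0 k : U k = 0 by have := comb0 k; rewrite !mxE.
have W_neq0 : edot (crossE a z) (crossE a z) != 0 by apply: contra w_neq0 => /eqP/edot_eq0->.
have tW : t * edot (crossE a z) (crossE a z) = 0.
  transitivity (crossE a z 0 i0 * (a 0 i1 * U i2 - a 0 i2 * U i1)
      + crossE a z 0 i1 * (a 0 i2 * U i0 - a 0 i0 * U i2)
      + crossE a z 0 i2 * (a 0 i0 * U i1 - a 0 i1 * U i0)).
    by rewrite /U /edot !crossEE; ring.
  by rewrite !U0; ring.
have sW : s * edot (crossE a z) (crossE a z) = 0.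
  transitivity (crossE a z 0 i0 * (U i1 * z 0 i2 - U i2 * z 0 i1)
      + crossE a z 0 i1 * (U i2 * z 0 i0 - U i0 * z 0 i2)
      + crossE a z 0 i2 * (U i0 * z 0 i1 - U i1 * z 0 i0)).
    by rewrite /U /edot !crossEE; ring.
  by rewrite !U0; ring.
by split; apply/eqP; [move/eqP: sW | move/eqP: tW]; rewrite mulf_eq0 (negPf W_neq0) orbF.
Qed.

Lemma det_mat3_crossE a z v (l : R) : (forall k, v 0 k = l * crossE a z 0 k) ->
  \det (mat3 a z v) = l * edot (crossE a z) (crossE a z).
Proof. by move=> vE; rewrite det_mx33 !mxE !inordK //= !vE /edot !crossEE; ring. Qed.

Definition warp f (s : R) := ((f s)^-2 - 1) / s ^+ 2.

Lemma gmatE f z m k : gmat f z m k = (m == k)%:R + warp f (enorm z) * (z 0 m * z 0 k).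
Proof. by rewrite !mxE big_ord1 !mxE. Qed.

Lemma gdot_gmat f z u v :
  gdot (gmat f z) u v = edot u v + warp f (enorm z) * edot u z * edot v z.
Proof. by rewrite /gdot !mxE sum_ord3 !mxE !sum_ord3 !gmatE !inord3_eq //= /edot; ring. Qed.

Lemma gdot_gmat_radial f z u : enorm z != 0 -> f (enorm z) != 0 ->
  gdot (gmat f z) u z = (f (enorm z))^-2 * edot u z.
Proof.
by move=> z_neq0 F_neq0; rewrite gdot_gmat edot_enorm /warp; field; rewrite z_neq0 F_neq0.
Qed.

Lemma is_cross_scaler G c : is_cross G c -> forall a b (k : R), c a (k *: b) = k *: c a b.
Proof.
case=> _ c_linr _ _ _ a b k; have c0 : c a 0 = 0.
  by have := c_linr (-1) a 0 0; rewrite scaler0 addr0 scaleN1r addNr.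
by have := c_linr k a b 0; rewrite !addr0 c0 addr0.
Qed.

Lemma is_cross_gmat f z c : 0 < enorm z -> 0 < f (enorm z) ->
  is_cross (gmat f z) c -> forall a, c a z = (f (enorm z))^-1 *: crossE a z.
Proof.
move=> z_gt0 F_gt0 [_ _ c_orth c_norm c_orient] a.
have z_neq0 : enorm z != 0 by rewrite gt_eqF.
have F_neq0 : f (enorm z) != 0 by rewrite gt_eqF.
set v := c a z; set w := crossE a z.
have [va vz] : edot v a = 0 /\ edot v z = 0.
  have [ga gz] := c_orth a z.
  have vz : edot v z = 0.
    move/eqP: gz; rewrite gdot_gmat_radial // mulf_eq0 invr_eq0 expf_eq0 /=.
    by rewrite (negPf F_neq0) => /eqP.
  by split=> //; rewrite gdot_gmat vz mulr0 mul0r addr0 in ga.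
have vv : edot v v = (f (enorm z))^-2 * edot w w.
  have := c_norm a z; rewrite !gdot_gmat_radial // !gdot_gmat vz edot_crossE (edot_enorm z).
  by rewrite mulr0 addr0 => ->; rewrite /warp; field; rewrite z_neq0 F_neq0.
have [W0|W_neq0] := eqVneq (edot w w) 0.
  rewrite (edot_eq0 W0) (@edot_eq0 v) ?scaler0 //.
  by rewrite vv W0 mulr0.
have W_gt0 : 0 < edot w w.
  by rewrite lt0r W_neq0 /edot -!expr2 !addr_ge0 ?sqr_ge0.
pose l := edot v w / edot w w.
have vE k : v 0 k = l * w 0 k.
  by apply: (mulfI W_neq0); rewrite edot_crossE_orthogonal // /l mulrA mulrCA divff // mulr1.
have l_gt0 : 0 < l.
  have w_neq0 : w != 0.
    by apply: contra W_neq0 => /eqP->; apply/eqP; rewrite /edot !mxE; ring.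
  by have := c_orient a z (crossE_independent w_neq0); rewrite (det_mat3_crossE vE) pmulr_lgt0.
have l2 : l ^+ 2 = (f (enorm z))^-1 ^+ 2.
  apply: (mulIf W_neq0); rewrite exprVn -vv /edot !vE; ring.
have lF : l = (f (enorm z))^-1.
  by apply/eqP; rewrite -(@eqrXn2 _ 2) ?l2 ?ltW ?invr_gt0.
by apply/rowP => k; rewrite vE lF [RHS]mxE.
Qed.

Lemma Efield_cross_Xfield f z c (al : 'I_3) : 0 < enorm z -> 0 < f (enorm z) ->
  is_cross (gmat f z) c -> Efield al z = c (e3 R al) (Xfield f z).
Proof.
move=> z_gt0 F_gt0 c_cross.
have -> : Xfield f z = f (enorm z) *: z.
  by rewrite /Xfield scalerA mulrAC divff ?mul1r // gt_eqF.
rewrite (is_cross_scaler c_cross) (is_cross_gmat z_gt0 F_gt0 c_cross).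
by rewrite scalerA divff ?scale1r // gt_eqF.
Qed.

Definition coord3 (m : 'I_3) : 'rV[R]_3 -> R := fun y => y 0 m.
Definition sqnorm3 : 'rV[R]_3 -> R :=
  coord3 i0 * coord3 i0 + coord3 i1 * coord3 i1 + coord3 i2 * coord3 i2.

Lemma enorm_sqrt : @enorm R = Num.sqrt \o sqnorm3.
Proof. by apply/funext => y; rewrite /enorm sum_ord3 /= !expr2. Qed.

Lemma differentiable_coord3 m z : differentiable (coord3 m) z.
Proof. exact: differentiable_coord. Qed.

Lemma derive_coord3 m z v : 'D_v (coord3 m) z = v 0 m.
Proof.
have := derive_mx (@derivable_id R _ z v); rewrite derive_id => idE.
by rewrite {2}idE mxE.
Qed.

Lemma differentiable_sqnorm3 z : differentiable sqnorm3 z.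
Proof.
rewrite /sqnorm3; do 2?apply: differentiableD.
all: by apply: differentiableM; exact: differentiable_coord3.
Qed.

Lemma derive_sqnorm3 z v : 'D_v sqnorm3 z = 2 * edot z v.
Proof.
have dc m : derivable (coord3 m) z v by exact/diff_derivable/differentiable_coord3.
have dsq m : derivable (coord3 m * coord3 m) z v := derivableM (dc m) (dc m).
rewrite /sqnorm3 deriveD; [|exact: derivableD|exact: dsq].
rewrite deriveD // !deriveM // !derive_coord3.
have scaleE (x y : R) : x *: y = x * y by [].
by rewrite !scaleE /edot /coord3; ring.
Qed.

Lemma differentiable_enorm z : 0 < enorm z -> differentiable (@enorm R) z.
Proof.
rewrite enorm_sqrt /= sqrtr_gt0 => sq_gt0.
apply: differentiable_comp; first exact: differentiable_sqnorm3.
by apply/derivable1_diffP; have [] := is_derive1_sqrt sq_gt0.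
Qed.

Lemma diff_enorm_orthogonal z v : 0 < enorm z -> edot z v = 0 -> 'd (@enorm R) z v = 0.
Proof.
rewrite enorm_sqrt /= sqrtr_gt0 => sq_gt0 zv.
rewrite diff_comp; last 2 first.
- exact: differentiable_sqnorm3.
- by apply/derivable1_diffP; have [] := is_derive1_sqrt sq_gt0.
by rewrite /= -(deriveE v (differentiable_sqnorm3 z)) derive_sqnorm3 zv mulr0 linear0.
Qed.

Lemma differentiable_warp f s : 0 < s -> f s != 0 -> derivable f s 1 ->
  differentiable (warp f) s.
Proof.
move=> s_gt0 F_neq0 /derivable1_diffP df.
have -> : warp f = ((fun x => (f x * f x)^-1) - cst 1) * (fun x => (x * x)^-1).
  by apply/funext => x; rewrite /warp /= !expr2.
apply: differentiableM; first apply: differentiableB.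
- by apply: differentiableV; [exact: differentiableM | exact: mulf_neq0].
- exact: differentiable_cst.
apply: differentiableV; last by rewrite mulf_neq0 // gt_eqF.
exact: (@differentiableM _ _ id id).
Qed.

Lemma differentiable_radial (h : R -> R) z : 0 < enorm z ->
  differentiable h (enorm z) -> differentiable (h \o @enorm R) z.
Proof. by move=> z_gt0 dh; apply: differentiable_comp => //; exact: differentiable_enorm. Qed.

Lemma derive_radial_orthogonal (h : R -> R) z v : 0 < enorm z ->
  differentiable h (enorm z) -> edot z v = 0 -> 'D_v (h \o @enorm R) z = 0.
Proof.
move=> z_gt0 dh zv; rewrite deriveE; last exact: differentiable_radial.
by rewrite diff_comp /= ?diff_enorm_orthogonal ?linear0 //; exact: differentiable_enorm.
Qed.

Lemma derive_gmat f z v (l b : 'I_3) : differentiable (warp f \o @enorm R) z ->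
  'D_v (fun y => gmat f y l b) z = 'D_v (warp f \o @enorm R) z * (z 0 l * z 0 b)
    + warp f (enorm z) * (v 0 l * z 0 b + z 0 l * v 0 b).
Proof.
move=> dwarp; have dc m : derivable (coord3 m) z v.
  exact/diff_derivable/differentiable_coord3.
have dw : derivable (warp f \o @enorm R) z v by exact: diff_derivable.
have -> : (fun y => gmat f y l b) =
    cst (l == b)%:R + (warp f \o @enorm R) * (coord3 l * coord3 b).
  by apply/funext => y; rewrite gmatE.
have dlb := derivableM (dc l) (dc b).
rewrite deriveD ?derive_cst ?add0r; [|exact: derivable_cst|exact: derivableM].
have scaleE (x y : R) : x *: y = x * y by [].
have mulfE (F G : 'rV[R]_3 -> R) y : (F * G) y = F y * G y by [].
rewrite (deriveM dw dlb) (deriveM (dc l) (dc b)) !derive_coord3 !scaleE !mulfE /coord3 /=.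
by ring.
Qed.

Lemma derive_crossE a (r : 'rV[R]_2 -> 'rV[R]_3) (p d : 'rV[R]_2) (k : 'I_3) :
  differentiable r p ->
  'D_d (fun q => crossE a (r q) 0 k) p = crossE a ('D_d r p) 0 k.
Proof.
move=> dr; have {}dr : derivable r p d by exact: diff_derivable.
pose rc (c : 'I_3) q := r q 0 c.
have drc c : derivable (rc c) p d by exact: (derivable_mxP r p d).1 dr 0 c.
have Drc c : 'D_d (rc c) p = 'D_d r p 0 c by rewrite (derive_mx dr) mxE.
have Dminor (c1 c2 : 'I_3) (x y : R) :
    'D_d (x *: rc c1 - y *: rc c2) p = x * 'D_d r p 0 c1 - y * 'D_d r p 0 c2.
  by rewrite deriveB ?deriveZ ?Drc //; exact: derivableZ.
rewrite -(inord_val k); case: k => -[|[|[|]]] //= _; rewrite crossEE -Dminor;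
  by congr ('D_d _ p); apply/funext => q; rewrite crossEE.
Qed.

Lemma derive_e3_sum (h : 'rV[R]_3 -> R) z v : differentiable h z ->
  'D_v h z = 'D_(e3 R i0) h z * v 0 i0 + 'D_(e3 R i1) h z * v 0 i1
    + 'D_(e3 R i2) h z * v 0 i2.
Proof.
move=> dh; rewrite !deriveE //.
have vE : v = v 0 i0 *: e3 R i0 + v 0 i1 *: e3 R i1 + v 0 i2 *: e3 R i2.
  by apply: row3P; rewrite !mxE !inord3_eq //= !(mulr1, mulr0, addr0, add0r).
by rewrite [in LHS]vE !linearD !linearZ; congr (_ + _ + _); exact: mulrC.
Qed.

Lemma gmat_mulmxV f z : 0 < enorm z -> f (enorm z) != 0 ->
  gmat f z *m invmx (gmat f z) = 1%:M.
Proof.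
move=> z_gt0 F_neq0; have z_neq0 : enorm z != 0 by rewrite gt_eqF.
set ph := warp f (enorm z); set P := z^T *m z.
have one_ph : 1 + ph * enorm z ^+ 2 != 0.
  have -> : 1 + ph * enorm z ^+ 2 = (f (enorm z))^-2.
    by rewrite /ph /warp; field; rewrite z_neq0 F_neq0.
  by rewrite invr_eq0 expf_eq0 /= (negPf F_neq0).
have PP : P *m P = enorm z ^+ 2 *: P.
  have zz : z *m z^T = (enorm z ^+ 2)%:M.
    by apply/matrixP => i j; rewrite !ord1 !mxE sum_ord3 !mxE -edot_enorm mulr1n.
  by rewrite /P mulmxA -(mulmxA z^T) zz mul_mx_scalar -scalemxAl.
suff /mulmx1_unit[G_unit _] : gmat f z *m (1%:M - (ph / (1 + ph * enorm z ^+ 2)) *: P) = 1%:M.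
  exact: mulmxV.
rewrite /gmat -/ph -/P mulmxDl !mulmxBr !mul1mx !mulmx1 -!scalemxAl -scalemxAr PP !scalerA.
rewrite -/ph -addrA -scalerBl -scaleNr -scalerDl.
set q := ph / (1 + ph * enorm z ^+ 2).
have -> : - q + (ph - ph * q * enorm z ^+ 2) = 0 by rewrite /q; field.
by rewrite scale0r addr0.
Qed.

Lemma gdotE (G : 'M[R]_3) u w : gdot G u w = \sum_m u 0 m * \sum_k G m k * w 0 k.
Proof. by rewrite /gdot !mxE !sum_ord3 ?mxE ?sum_ord3 ?mxE; ring. Qed.

Lemma mulmx1_sum n (G Gi : 'M[R]_n) : G *m Gi = 1%:M ->
  forall (T : 'I_n -> R) (m : 'I_n), \sum_k G m k * \sum_l Gi k l * T l = T m.
Proof.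
move=> GGi T m; pose t : 'cV[R]_n := \col_l T l.
transitivity ((G *m (Gi *m t)) m 0); last by rewrite mulmxA GGi mul1mx mxE.
rewrite mxE; apply: eq_bigr => k _; rewrite mxE; congr (_ * _).
by apply: eq_bigr => l _; rewrite mxE.
Qed.

Lemma christoffel_lower f z (m a b : 'I_3) : gmat f z *m invmx (gmat f z) = 1%:M ->
  \sum_k gmat f z m k * christoffel f z k a b =
  2^-1 * (dgmat f z a m b + dgmat f z b m a - dgmat f z m a b).
Proof.
move=> GGi; rewrite /christoffel; under eq_bigr do rewrite mulrCA.
by rewrite -big_distrr /= (mulmx1_sum GGi).
Qed.

Lemma contract_index3 (g X v w : 'I_3 -> R) (T : 'I_3 -> 'I_3 -> 'I_3 -> R) :
  \sum_k g k * (X k + \sum_a \sum_b T k a b * v a * w b) =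
  \sum_k g k * X k + \sum_a \sum_b (\sum_k g k * T k a b) * v a * w b.
Proof. by rewrite !sum_ord3; ring. Qed.

Lemma gdot_covD f r (E : 'rV[R]_3 -> 'rV[R]_3) (j : 'I_2) p u :
  gmat f (r p) *m invmx (gmat f (r p)) = 1%:M ->
  gdot (gmat f (r p)) u (covD f r E j p) =
  \sum_m u 0 m * (\sum_k gmat f (r p) m k * 'D_(e2 R j) (fun q => E (r q) 0 k) p
    + \sum_a \sum_b 2^-1 * (dgmat f (r p) a m b + dgmat f (r p) b m a - dgmat f (r p) m a b)
        * rpart r j p 0 a * E (r p) 0 b).
Proof.
move=> GGi; rewrite gdotE; apply: eq_bigr => m _; congr (_ * _).
under eq_bigr do rewrite [X in _ * X]mxE.
rewrite (contract_index3 _ (fun k => 'D_(e2 R j) (fun q => E (r q) 0 k) p)).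
congr (_ + _); apply: eq_bigr => a _; apply: eq_bigr => b _.
by rewrite christoffel_lower.
Qed.

Lemma gdot_covD_Efield f r (al : 'I_3) (j : 'I_2) p u :
  differentiable r p -> gmat f (r p) *m invmx (gmat f (r p)) = 1%:M ->
  gdot (gmat f (r p)) u (covD f r (Efield al) j p) =
  \sum_m u 0 m * (\sum_k gmat f (r p) m k * crossE (e3 R al) (rpart r j p) 0 k
    + \sum_a \sum_b 2^-1 * (dgmat f (r p) a m b + dgmat f (r p) b m a - dgmat f (r p) m a b)
        * rpart r j p 0 a * crossE (e3 R al) (r p) 0 b).
Proof.
move=> dr GGi; rewrite gdot_covD //; apply: eq_bigr => m _; congr (_ * (_ + _)).
by apply: eq_bigr => k _; rewrite derive_crossE.
Qed.

Lemma dgmat_warp f z (c l b : 'I_3) : differentiable (warp f \o @enorm R) z ->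
  dgmat f z c l b = 'D_(e3 R c) (warp f \o @enorm R) z * (z 0 l * z 0 b)
    + warp f (enorm z) * ((l == c)%:R * z 0 b + z 0 l * (b == c)%:R).
Proof. by move=> dwarp; rewrite /dgmat derive_gmat // !mxE. Qed.

Lemma rotation_killing_identity (G : 'M[R]_3) (D : 'I_3 -> 'I_3 -> 'I_3 -> R) (P : 'I_3 -> R)
    (ph : R) a z u v :
  (forall m k, G m k = (m == k)%:R + ph * (z 0 m * z 0 k)) ->
  (forall c l b, D c l b = P c * (z 0 l * z 0 b)
                           + ph * ((l == c)%:R * z 0 b + z 0 l * (b == c)%:R)) ->
  \sum_m u 0 m * (\sum_k G m k * crossE a v 0 k + \sum_a' \sum_b
      2^-1 * (D a' m b + D b m a' - D m a' b) * v 0 a' * crossE a z 0 b) +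
  \sum_m v 0 m * (\sum_k G m k * crossE a u 0 k + \sum_a' \sum_b
      2^-1 * (D a' m b + D b m a' - D m a' b) * u 0 a' * crossE a z 0 b)
  = edot u z * edot v z * (P i0 * crossE a z 0 i0 + P i1 * crossE a z 0 i1
                           + P i2 * crossE a z 0 i2).
Proof. by move=> GE DE; rewrite !sum_ord3 !GE !DE !inord3_eq //= !crossEE /edot; field. Qed.

Lemma Efield_killing f r (al : 'I_3) (i j : 'I_2) p :
  differentiable r p -> 0 < enorm (r p) -> f (enorm (r p)) != 0 ->
  derivable f (enorm (r p)) 1 ->
  gdot (gmat f (r p)) (rpart r i p) (covD f r (Efield al) j p) +
  gdot (gmat f (r p)) (rpart r j p) (covD f r (Efield al) i p) = 0.
Proof.
move=> dr z_gt0 F_neq0 df.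
have GGi := gmat_mulmxV z_gt0 F_neq0.
have dwarp := differentiable_warp z_gt0 F_neq0 df.
have dwarp_enorm := differentiable_radial z_gt0 dwarp.
rewrite !gdot_covD_Efield //.
have dgmatE c l b := dgmat_warp c l b dwarp_enorm.
rewrite (rotation_killing_identity _ _ _ (gmatE f (r p)) dgmatE).
by rewrite -(derive_e3_sum _ dwarp_enorm) derive_radial_orthogonal ?mulr0 ?edot_crossEr.
Qed.

End Warped.

Local Open Scope classical_set_scope.

Theorem lemma8 (R : realType) (I : set R) (f : R -> R)
    (U : set 'rV[R]_2) (r : 'rV[R]_2 -> 'rV[R]_3) :
  open I -> I `<=` [set x | 0 < x] ->
  (forall x, I x -> 0 < f x) ->
  (forall (n : nat) x, I x -> derivable (f^`(n)) x 1) ->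
  open U ->
  (forall p, U p -> differentiable r p /\ I (enorm (r p))) ->
  (forall (al : 'I_3) (i j : 'I_2) p, U p ->
     gdot (gmat f (r p)) (rpart r i p) (covD f r (@Efield R al) j p) +
     gdot (gmat f (r p)) (rpart r j p) (covD f r (@Efield R al) i p) = 0)
  /\
  (forall (al : 'I_3) (z : 'rV[R]_3), I (enorm z) ->
     forall c, is_cross (gmat f z) c ->
       @Efield R al z = c (@e3 R al) (Xfield f z)).
Proof.
move=> _ I_pos f_pos f_smooth _ r_surf; split.
- move=> al i j p /r_surf[dr Ir].
  apply: Efield_killing => //; [exact: I_pos | by rewrite gt_eqF ?f_pos |].
  by have := f_smooth 0%N _ Ir; rewrite derive1n0.
- move=> al z Iz c c_cross.
  exact: Efield_cross_Xfield (I_pos _ Iz) (f_pos _ Iz) c_cross.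
Qed.
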